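(* Assume there exists $\theta>0$ with $\psi(\theta)=\log E\exp(\theta X_1)<\infty$. Fix $\epsilon\in(0,\mu)$ and, for the $s$-th system, let $$\kappa(A)=\inf\{k\ge1:\ |A_{n+1}|\ge n(\mu-\epsilon)/s\ \text{for all } n\ge k\}.$$ Then $E\kappa(A)=O(s)$ as $s\to\infty$.
   Context: Let $(X_n)_{n\ge1}$ be i.i.d. strictly positive interarrival times with mean $\mu\in(0,\infty)$. For $s\in\{1,2,\dots\}$, the arrival epochs of the $s$-th system form a time-stationary renewal process on $\mathbb R$ with interarrival times distributed as $X_1/s$; the epochs in $(-\infty,0]$, counted backwards from $0$, are $0\ge A_1>A_2>\cdots$ with $A_n-A_{n+1}=X_n/s$, where $|A_1|$ has the stationary-excess distribution of $X_1/s$ and is independent of $(X_n)$. $\inf\emptyset=\infty$. *)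

From HB Require Import structures.
From mathcomp Require Import all_boot all_order all_algebra.
From mathcomp Require Import all_classical all_reals all_analysis.
Set Implicit Arguments.
Unset Strict Implicit.
Unset Printing Implicit Defensive.
Import Order.TTheory GRing.Theory Num.Theory.
Import numFieldNormedType.Exports.
Local Open Scope classical_set_scope.
Local Open Scope ring_scope.

Section Defs.
Context {d : measure_display} {T : measurableType d} {R : realType}.
Variable P : probability T R.

Definition mutually_independent (Y : nat -> T -> R) : Prop :=
  forall (J : seq nat), uniq J ->
  forall B : nat -> set R, (forall j, measurable (B j)) ->
  P (\bigcap_(j in [set j | j \in J]) (Y j @^-1` B j)) =
    (\prod_(j <- J) P (Y j @^-1` B j))%E.

(* Z has the stationary-excess (equilibrium) distribution of the
   nonnegative random variable Y whose mean is m: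
   P(Z <= x) = (1/m) \int_0^x P(Y > u) du  for every real x
   (for x < 0 the interval is empty, so Z >= 0 a.s.). *)
Definition stationary_excess (Z Y : T -> R) (m : R) : Prop :=
  forall x : R,
    P [set t | Z t <= x] =
      ((m^-1)%:E * \int[@lebesgue_measure R]_(u in `[0%R, x]) P [set t | (u < Y t)%R])%E.

End Defs.

Section Renewal.
Context {T : Type} {R : realType}.

(* X k = X_{k+1} (interarrival times, 0-indexed); A1 = A_1 (nonpositive).
   epoch X A1 s n = A_n for n >= 1:  A_{n+1} = A_1 - (X_1+...+X_n)/s. *)
Definition epoch (X : nat -> T -> R) (A1 : T -> R) (s : nat) (n : nat) (t : T) : R :=
  A1 t - (\sum_(i < n.-1) X i t) / s%:R.

Definition kappa (X : nat -> T -> R) (A1 : T -> R) (mu eps : R) (s : nat) (t : T)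
  : \bar R :=
  ereal_inf [set (k%:R)%:E | k in
    [set k : nat | (1 <= k)%N /\
       forall n : nat, (k <= n)%N ->
         n%:R * (mu - eps) / s%:R <= `|epoch X A1 s n.+1 t| ]].

End Renewal.

(* Since A_1 <= 0, |A_(n+1)| >= (X_1 + ... + X_n) / s, so kappa(A) is at most the
   first time after which the partial sums S_n stay above n (mu - eps); this time
   does not depend on s, hence E kappa(A) is even bounded.  To bound it, approximate
   X from below by a simple function h with E h(X) > mu - eps.  Then S_n is at least
   the sum over the levels v of h of v times the number of i < n with h(X_i) = v;
   each such count is binomial, so by a Chernoff bound it falls noticeably below
   its mean only with probability geometrically small in n.  Outside these bad
   events W_n we have S_n >= n (mu - eps), so kappa <= 1 + sum_n (n + 1) 1_(W_n),
   whose expectation is finite. *)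

From HB Require Import structures.
From mathcomp Require Import all_boot all_order all_algebra.
From mathcomp Require Import all_classical all_reals all_analysis.
From mathcomp Require Import measurable_realfun ring lra.
Import Order.TTheory GRing.Theory Num.Theory.
Import numFieldNormedType.Exports.
Local Open Scope classical_set_scope.
Local Open Scope ring_scope.
Import HBNNSimple.

Lemma sum_prod_bool_ffun (R : comSemiRingType) n (x y : R) :
  \sum_(f : {ffun 'I_n -> bool}) \prod_(i < n) (if f i then x else y) = (x + y) ^+ n.
Proof.
rewrite -(bigA_distr_bigA (fun (i : 'I_n) (b : bool) => if b then x else y)).
by rewrite prodr_const card_ord big_bool.
Qed.

Lemma sum_succ_mul_geometric (R : comRingType) (r : R) N :
  (\sum_(n < N) n.+1%:R * r ^+ n) * (1 - r) ^+ 2 = 1 - N.+1%:R * r ^+ N + N%:R * r ^+ N.+1.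
Proof.
elim: N => [|N IH]; first by rewrite big_ord0 mul0r expr0 mulr1 subrr add0r mul0r.
rewrite big_ord_recr /= mulrDl IH !exprS -!natr1; ring.
Qed.

Lemma sum_succ_geometric_le (R : realFieldType) (r : R) N : 0 <= r < 1 ->
  \sum_(n < N) n.+1%:R * r ^+ n <= ((1 - r) ^+ 2)^-1.
Proof.
move=> /andP[r0 r1]; have r1' : 0 < (1 - r) ^+ 2 by rewrite exprn_gt0 // subr_gt0.
rewrite -[leRHS]mul1r ler_pdivlMr // sum_succ_mul_geometric exprS mulrA.
have rN : 0 <= r ^+ N by exact: exprn_ge0.
have : r ^+ N * (N%:R * r) <= r ^+ N * N.+1%:R.
  apply: ler_wpM2l => //; rewrite -natr1.
  have N0 : (0 : R) <= N%:R by [].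
  nra.
lra.
Qed.

Lemma binomial_lower_tail_geometric (R : realType) (p q : R) : 0 <= p <= 1 -> q < p ->
  exists2 r : R, 0 <= r < 1 & forall n : nat,
  \sum_(f : {ffun 'I_n -> bool} | (\sum_(i < n) nat_of_bool (f i))%:R < n%:R * q)
     \prod_(i < n) (if f i then p else 1 - p) <= r ^+ n.
Proof.
move=> /andP[p0 p1] qp.
pose l := (p - q) / 2; pose e := expR (- l); pose rho := expR (- (l * q)).
have l0 : 0 < l by rewrite divr_gt0 // subr_gt0.
have e0 : 0 < e by exact: expR_gt0.
have rho0 : 0 < rho by exact: expR_gt0.
have ep0 : 0 <= e * p by rewrite mulr_ge0 // ltW.
(* With [l = (p - q) / 2]: [e p + 1 - p <= 1 - l p / (1 + l) < 1 - l q <= rho]. *)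
exists ((e * p + (1 - p)) / rho).
  apply/andP; split.
    by rewrite divr_ge0 ?(ltW rho0) // addr_ge0 // subr_ge0.
  rewrite ltr_pdivrMr // mul1r.
  have e1l : e * (1 + l) <= 1.
    rewrite /e expRN ler_pdivrMl ?expR_gt0 // mulr1; exact: expR_ge1Dx.
  have rhoq : 1 - l * q <= rho by rewrite /rho expR_ge1Dx.
  have epl : e * p * (1 + l) <= p by rewrite mulrAC ler_piMl.
  have lq : 0 < l * (p - q - l * q).
    rewrite mulr_gt0 // (_ : p - q - l * q = (p - q) * (1 - q / 2)); last first.
      by rewrite /l; field.
    by rewrite mulr_gt0 ?subr_gt0 //; lra.
  nra.
(* Chernoff: weighting each success by [e] costs a factor at least [rho ^+ n]
   on the event of fewer than [n q] successes. *)
move=> n; rewrite expr_div_n -sum_prod_bool_ffun mulr_suml.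
rewrite [leRHS](bigID (fun f : {ffun 'I_n -> bool} =>
  (\sum_(i < n) nat_of_bool (f i))%:R < n%:R * q)) /=.
rewrite -[leLHS]addr0; apply: lerD; last first.
  apply: sumr_ge0 => f _; rewrite divr_ge0 ?exprn_ge0 ?(ltW rho0) //.
  by apply: prodr_ge0 => i _; case: (f i) => //; rewrite subr_ge0.
apply: ler_sum => f; set k := (\sum_(i < n) _)%N => kq.
have -> : \prod_(i < n) (if f i then e * p else 1 - p) =
    e ^+ k * \prod_(i < n) (if f i then p else 1 - p).
  rewrite -prodrXr -big_split; apply: eq_bigr => i _.
  by case: (f i); rewrite /= ?expr1 ?expr0 ?mul1r.
have rho_ek : rho ^+ n <= e ^+ k.
  by rewrite -!expRM_natl ler_expR !mulrN lerN2; nra.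
rewrite mulrAC -[leLHS]mul1r ler_wpM2r //.
  by apply: prodr_ge0 => i _; case: (f i) => //; rewrite subr_ge0.
by rewrite ler_pdivlMr ?exprn_gt0 // mul1r.
Qed.

Lemma sum_by_level (R : comSemiRingType) n (F : 'I_n -> R) (vs : seq R) :
  uniq vs -> (forall i, F i \in vs) ->
  \sum_(i < n) F i = \sum_(v <- vs) v * (\sum_(i < n) (F i == v))%:R.
Proof.
move=> vs_uniq Fvs.
rewrite (eq_bigr (fun i => \sum_(v <- vs) v * (F i == v)%:R)); last first.
  move=> i _; rewrite (bigD1_seq (F i)) //= eqxx mulr1 big1 ?addr0 // => w.
  by rewrite eq_sym => /negbTE ->; rewrite mulr0.
by rewrite exchange_big; apply: eq_bigr => v _; rewrite natr_sum mulr_sumr.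
Qed.

Lemma exists_uniform_margin (R : realFieldType) (vs : seq R) (p : R -> R) (a : R) :
  (forall v, v \in vs -> 0 <= v) -> a < \sum_(v <- vs) v * p v ->
  exists2 del, 0 < del & a <= \sum_(v <- vs) v * (p v - del).
Proof.
move=> vs0 aS; set S := \sum_(v <- vs) v * p v in aS.
set Sv := \sum_(v <- vs) v.
have Sv0 : 0 <= Sv by rewrite /Sv big_seq sumr_ge0.
have Sv1 : 0 < 1 + Sv by lra.
pose del := (S - a) / (1 + Sv).
have delSv : del * (1 + Sv) = S - a by rewrite divfK // gt_eqF.
exists del; first by rewrite divr_gt0 // subr_gt0.
have -> : \sum_(v <- vs) v * (p v - del) = S - del * Sv.
  by rewrite /S /Sv mulr_sumr -sumrB; apply: eq_bigr => v _; ring.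
have del0 : 0 < del by rewrite divr_gt0 // subr_gt0.
nra.
Qed.

Lemma level_counts_sum_ge (R : realDomainType) n (x : 'I_n -> R) (h : R -> R)
    (vs : seq R) (q : R -> R) (a : R) :
  uniq vs -> (forall y, h y \in vs) -> (forall v, v \in vs -> 0 <= v) ->
  (forall i, h (x i) <= x i) ->
  (forall v, v \in vs -> n%:R * q v <= (\sum_(i < n) (h (x i) == v))%:R) ->
  a <= \sum_(v <- vs) v * q v ->
  n%:R * a <= \sum_(i < n) x i.
Proof.
move=> vsU hvs vs0 hx counts margin.
apply: le_trans (ler_sum _ (fun i _ => hx i)).
rewrite (@sum_by_level _ _ (fun i => h (x i)) vs vsU) //.
apply: le_trans (ler_wpM2l _ margin) _ => //.
rewrite mulr_sumr big_seq [leRHS]big_seq; apply: ler_sum => v vvs.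
by rewrite mulrCA ler_wpM2l ?vs0 ?counts.
Qed.

Lemma common_geometric_bound (R : realDomainType) (I : eqType) (s : seq I)
    (u : I -> nat -> \bar R) :
  (forall i, i \in s -> exists2 r : R, 0 <= r < 1 & forall n, (u i n <= (r ^+ n)%:E)%E) ->
  exists2 r : R, 0 <= r < 1 & forall i, i \in s -> forall n, (u i n <= (r ^+ n)%:E)%E.
Proof.
elim: s => [_|j s IH bounds]; first by exists 0 => //; rewrite lexx ltr01.
have [i si|r /andP[r0 r1] ur] := IH; first by apply: bounds; rewrite inE si orbT.
have [r' /andP[r0' r1'] ur'] := bounds j (mem_head j s).
have rmax : 0 <= Num.max r r' by rewrite le_max r0.
exists (Num.max r r'); first by rewrite rmax gt_max r1 r1'.
move=> i; rewrite inE => /predU1P[-> | si] n.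
  by apply: le_trans (ur' n) _; rewrite lee_fin lerXn2r ?nnegrE // le_max lexx orbT.
by apply: le_trans (ur i si n) _; rewrite lee_fin lerXn2r ?nnegrE // le_max lexx.
Qed.

Lemma le_measure_big_setU d (T : measurableType d) (R : realType)
  (mu : {measure set T -> \bar R}) (I : Type) (r : seq I) (Pr : pred I) (F : I -> set T) :
  (forall i, measurable (F i)) ->
  (mu (\big[setU/set0]_(i <- r | Pr i) F i) <= \sum_(i <- r | Pr i) mu (F i))%E.
Proof.
move=> mF; elim: r => [|i r IH]; first by rewrite !big_nil measure0.
rewrite !big_cons; case: (Pr i) => //.
by apply: le_trans (measureU2 _ (mF i) _) _; [exact: bigsetU_measurable | exact: leeD].
Qed.

(* No measurability is required: [kappa] is not known to be measurable. *)
Lemma ge0_le_integral_nonmeas d (T : measurableType d) (R : realType)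
  (mu : {measure set T -> \bar R}) (f g : T -> \bar R) :
  (forall x, 0 <= f x)%E -> (forall x, f x <= g x)%E ->
  (\int[mu]_x f x <= \int[mu]_x g x)%E.
Proof.
move=> f0 fg; have g0 x : (0 <= g x)%E by exact: le_trans (f0 x) (fg x).
rewrite !ge0_integralTE //; apply: ge_ereal_sup => _ [h hf <-].
by apply: ereal_sup_ubound; exists h => // x; exact: le_trans (hf x) (fg x).
Qed.

Lemma nneseries_le (R : realType) (u : (\bar R)^nat) (c : \bar R) :
  (forall n, 0 <= u n)%E -> (forall N, \sum_(0 <= n < N) u n <= c)%E ->
  (\sum_(n <oo) u n <= c)%E.
Proof. by move=> u0 uc; apply: lime_le; [exact: is_cvg_nneseries | exact: nearW]. Qed.

(* Extension by [false] to all of [nat], the index set of [mutually_independent]. *)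
Definition ext_ffun {n} (f : {ffun 'I_n -> bool}) (j : nat) : bool :=
  if insub j is Some i then f i else false.

Definition pattern_event {T : Type} {R : realType} (X : nat -> T -> R) (B : set R) n
    (f : {ffun 'I_n -> bool}) : set T :=
  \bigcap_(j in [set j | j \in iota 0 n]) (X j @^-1` (if ext_ffun f j then B else ~` B)).

Definition rare_hits_event {T : Type} {R : realType} (X : nat -> T -> R) (B : set R)
    (q : R) n : set T :=
  \big[setU/set0]_(f : {ffun 'I_n -> bool} | (\sum_(i < n) nat_of_bool (f i))%:R < n%:R * q)
    pattern_event X B n f.

Lemma mem_rare_hits_event {T : Type} {R : realType} (X : nat -> T -> R) (B : set R)
    (q : R) n t :
  (\sum_(i < n) nat_of_bool (X i t \in B))%:R < n%:R * q -> rare_hits_event X B q n t.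
Proof.
move=> few; rewrite /rare_hits_event -bigcup_seq_cond.
exists [ffun i : 'I_n => X i t \in B].
  by rewrite /= mem_index_enum; under eq_bigr => i _ do rewrite ffunE.
move=> j /=; rewrite mem_iota add0n => jn.
rewrite /ext_ffun insubT /= ffunE.
by case: (boolP (X j t \in B)) => [/set_mem|/negP Bj] //; apply: contra_not Bj => /mem_set.
Qed.

Section iid_events.
Context d (T : measurableType d) (R : realType) (P : probability T R).
Variable X : nat -> {RV P >-> R}.
Hypothesis X_id : forall k, distribution P (X k) = distribution P (X 0%N).
Hypothesis X_ind : mutually_independent P (fun k => X k : T -> R).
Variable B : set R.
Hypothesis mB : measurable B.

Let p := fine (P (X 0%N @^-1` B)).

Lemma measurable_pattern_event n f : measurable (pattern_event (fun k => X k : T -> R) B n f).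
Proof.
apply: bigcap_measurableType => j _; apply: measurable_funPTI.
by case: ext_ffun => //; exact: measurableC.
Qed.

Lemma measurable_rare_hits_event q n :
  measurable (rare_hits_event (fun k => X k : T -> R) B q n).
Proof. by apply: bigsetU_measurable => f _; exact: measurable_pattern_event. Qed.

Lemma prob_pattern_event n f :
  P (pattern_event (fun k => X k : T -> R) B n f) =
  (\prod_(i < n) (if f i then p else 1 - p))%:E.
Proof.
rewrite /pattern_event X_ind ?iota_uniq //; last first.
  by move=> j; case: ext_ffun => //; exact: measurableC.
rewrite -prodEFin (_ : iota 0 n = index_iota 0 n) ?big_mkord; last first.
  by rewrite /index_iota subn0.
apply: eq_bigr => i _; rewrite /ext_ffun valK.
have -> : P (X i @^-1` (if f i then B else ~` B)) =
          P (X 0%N @^-1` (if f i then B else ~` B)).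
  by have := congr1 (fun m => m (if f i then B else ~` B)) (X_id i).
have mB0 : measurable (X 0%N @^-1` B) by exact: measurable_funPTI.
case: (f i); first by rewrite fineK // fin_num_measure.
by rewrite EFinB fineK ?fin_num_measure // preimage_setC probability_setC.
Qed.

Lemma prob_rare_hits_event_geometric q : q < p ->
  exists2 r : R, 0 <= r < 1 & forall n,
    (P (rare_hits_event (fun k => X k : T -> R) B q n) <= (r ^+ n)%:E)%E.
Proof.
move=> qp; have mB0 : measurable (X 0%N @^-1` B) by exact: measurable_funPTI.
have p01 : 0 <= p <= 1.
  by rewrite fine_ge0 //= -lee_fin fineK ?fin_num_measure // probability_le1.
have [r r01 tail] := @binomial_lower_tail_geometric R _ _ p01 qp.
exists r => // n; rewrite /rare_hits_event.
apply: le_trans; first exact: le_measure_big_setU (measurable_pattern_event n).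
rewrite (eq_bigr (fun f : {ffun 'I_n -> bool} =>
  (\prod_(i < n) (if f i then p else 1 - p))%:E)); last first.
  by move=> f _; exact: prob_pattern_event.
by rewrite sumEFin lee_fin; exact: tail.
Qed.

End iid_events.

Section mean_levels.
Context d (T : measurableType d) (R : realType) (P : probability T R).
Variables (Y : {RV P >-> R}) (mu a : R).
Hypothesis Y_ge0 : forall t, 0 <= Y t.
Hypothesis Y_mean : ('E_P[Y] = mu%:E)%E.
Hypothesis a_lt_mu : a < mu.

Lemma exists_nnsfun_lt_mean : exists2 h : {nnsfun R >-> R},
  (forall y, 0 <= y -> h y <= y) & (a%:E < sintegral (distribution P Y) h)%E.
Proof.
have mnorm : measurable_fun [set: R] (fun y : R => (`|y|)%:E : \bar R).
  by apply/measurable_EFinP; exact: normr_measurable.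
have : (\int[distribution P Y]_y (`|y|)%:E = mu%:E)%E.
  rewrite ge0_integral_distribution // -Y_mean expectation_def.
  by apply: eq_integral => t _; rewrite /= ger0_norm.
rewrite ge0_integralTE // => law_mean.
have /ereal_sup_gt[_ [h hle <-] ha] : (a%:E < ereal_sup
    [set sintegral (distribution P Y) h
    | h in [set h : {nnsfun R >-> R} | forall y, ((h y)%:E <= (`|y|)%:E)%E]])%E.
  by rewrite law_mean lte_fin.
by exists h => // y y0; have := hle y; rewrite lee_fin ger0_norm.
Qed.

Lemma exists_levels_lt_mean : exists (h : {nnsfun R >-> R}) (vs : seq R),
  [/\ uniq vs, forall y, h y \in vs, forall v, v \in vs -> 0 <= v,
      forall y, 0 <= y -> h y <= y &
      a < \sum_(v <- vs) v * fine (P (Y @^-1` (h @^-1` [set v])))].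
Proof.
have [h hle ha] := exists_nnsfun_lt_mean.
have hfin : finite_set (range h) by exact: fimfunP.
exists h; exists (finmap.enum_fset (fset_set (range h))); split.
- exact: finmap.fset_uniq.
- by move=> y; rewrite in_fset_set // mem_set //; exists y.
- by move=> v; rewrite in_fset_set // => /set_mem[y _ <-]; exact: fun_ge0.
- exact: hle.
rewrite -lte_fin -sumEFin; apply: lt_le_trans ha _.
rewrite sintegralE fsbig_finite //=; apply: lee_sum => v _.
by rewrite EFinM fineK // fin_num_measure //; exact: measurable_funPTI.
Qed.

End mean_levels.

Section lower_deviation.
Context d (T : measurableType d) (R : realType) (P : probability T R).
Variables (X : nat -> {RV P >-> R}) (mu : R).
Hypothesis X_ge0 : forall k t, 0 <= X k t.
Hypothesis X_id : forall k, distribution P (X k) = distribution P (X 0%N).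
Hypothesis X_ind : mutually_independent P (fun k => X k : T -> R).
Hypothesis X_mean : ('E_P[X 0%N] = mu%:E)%E.

Lemma partial_sums_ge_except_geometric a : a < mu ->
  exists W : nat -> set T, [/\ forall n, measurable (W n),
    exists (K : nat) (r : R), 0 <= r < 1 /\ forall n, (P (W n) <= (K%:R * r ^+ n)%:E)%E &
    forall n t, ~ W n t -> n%:R * a <= \sum_(i < n) X i t].
Proof.
move=> a_lt_mu.
have [h [vs [vsU hvs vs0 hle a_lt]]] :=
  @exists_levels_lt_mean _ _ _ P (X 0%N) mu a (X_ge0 0%N) X_mean a_lt_mu.
pose B v := h @^-1` [set v].
have mB v : measurable (B v) by exact: measurable_funPTI.
pose p v := fine (P (X 0%N @^-1` B v)).
have [del del0 margin] := @exists_uniform_margin _ vs p a vs0 a_lt.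
pose rare v n := rare_hits_event (fun k => X k : T -> R) (B v) (p v - del) n.
have [r r01 rare_geo] : exists2 r : R, 0 <= r < 1 &
    forall v, v \in vs -> forall n, (P (rare v n) <= (r ^+ n)%:E)%E.
  apply: common_geometric_bound => v _.
  by apply: prob_rare_hits_event_geometric => //; rewrite ltrBlDr ltrDl.
exists (fun n => \big[setU/set0]_(v <- vs) rare v n); split.
- by move=> n; apply: bigsetU_measurable => v _; exact: measurable_rare_hits_event.
- exists (size vs), r; split => // n.
  apply: le_trans.
    by apply: le_measure_big_setU => v; exact: measurable_rare_hits_event.
  apply: le_trans (_ : _ <= \sum_(v <- vs) (r ^+ n)%:E)%E _.
    by rewrite big_seq [leRHS]big_seq; apply: lee_sum => v vvs; exact: rare_geo.
  by rewrite sumEFin big_const_seq count_predT iter_addr_0 mulr_natl.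
move=> n t good.
apply: (@level_counts_sum_ge _ n (fun i => X i t) _ _ _ _ vsU hvs vs0 _ _ margin).
  by move=> i; apply: hle; exact: X_ge0.
move=> v vvs; rewrite leNgt; apply/negP => few; apply: good.
rewrite -bigcup_seq; exists v => //; apply: mem_rare_hits_event.
rewrite (eq_bigr (fun i : 'I_n => nat_of_bool (h (X i t) == v))) //.
by move=> i _; congr nat_of_bool; apply/idP/eqP => [/set_mem|/mem_set].
Qed.

End lower_deviation.

Section kappa_bounds.
Context {T : Type} {R : realType}.
Variables (X : nat -> T -> R) (A1 : T -> R) (mu eps : R) (s : nat) (t : T).
Hypothesis s_gt0 : (0 < s)%N.
Hypothesis A1_le0 : A1 t <= 0.

Lemma kappa_ge0 : (0 <= kappa X A1 mu eps s t)%E.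
Proof. by apply: le_ereal_inf_tmp => _ [k _ <-]; rewrite lee_fin. Qed.

Lemma kappa_le_of_partial_sums k : (0 < k)%N ->
  (forall n, (k <= n)%N -> n%:R * (mu - eps) <= \sum_(i < n) X i t) ->
  (kappa X A1 mu eps s t <= k%:R%:E)%E.
Proof.
move=> k_gt0 sums_ge; apply: ereal_inf_lbound; exists k => //; split => // n kn.
have s0 : 0 < s%:R :> R by rewrite ltr0n.
rewrite /epoch /= ler_normr; apply/orP; right; rewrite opprB.
rewrite -[leLHS]addr0 lerD ?oppr_ge0 //.
by rewrite ler_pM2r ?invr_gt0 // sums_ge.
Qed.

Lemma kappa_le_bad_weight (W : nat -> set T) :
  (forall n, ~ W n t -> n%:R * (mu - eps) <= \sum_(i < n) X i t) ->
  (kappa X A1 mu eps s t <= 1 + \sum_(n <oo) ((n.+1)%:R * \1_(W n) t)%:E)%E.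
Proof.
move=> good; set G := (\sum_(n <oo) _)%E.
have u0 n : (0 <= ((n.+1)%:R * \1_(W n) t)%:E :> \bar R)%E by rewrite lee_fin mulr_ge0.
have G0 : (0 <= G)%E by exact: nneseries_ge0.
have [->|G_noo] := eqVneq G +oo%E; first by rewrite addey ?leey.
have Gg : G = (fine G)%:E by rewrite fineK // ge0_fin_numE // ltey.
move: G0; rewrite Gg lee_fin; set g := fine G => g0.
have bad_le n : W n t -> n.+1%:R <= g.
  move=> Wn; rewrite -lee_fin -Gg; apply: le_trans (nneseries_lim_ge n.+1 _) => //.
  rewrite big_nat_recr //= indicE mem_set // mulr1.
  by apply: leeDr; exact: sume_ge0.
have g_itv := truncn_itv g0.
apply: le_trans (@kappa_le_of_partial_sums (Num.truncn g).+1 _ _) _ => //.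
  move=> n kn; apply: good => Wn; have := bad_le n Wn.
  have : (Num.truncn g).+2%:R <= n.+1%:R :> R by rewrite ler_nat ltnS.
  move: g_itv => /andP[_]; rewrite -!natr1; lra.
rewrite -EFinD lee_fin -natr1 addrC lerD2l.
by case/andP: g_itv.
Qed.

End kappa_bounds.

Lemma integral_bad_weight_le d (T : measurableType d) (R : realType) (P : probability T R)
    (W : nat -> set T) (K r : R) :
  (forall n, measurable (W n)) -> 0 <= K -> 0 <= r < 1 ->
  (forall n, (P (W n) <= (K * r ^+ n)%:E)%E) ->
  (\int[P]_t (1 + \sum_(n <oo) ((n.+1)%:R * \1_(W n) t)%:E) <=
     (1 + K / (1 - r) ^+ 2)%:E)%E.
Proof.
move=> mW K0 r01 PW.
have u0 n t : (0 <= ((n.+1)%:R * \1_(W n) t)%:E :> \bar R)%E by rewrite lee_fin mulr_ge0.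
have mterm n : measurable_fun [set: T] (fun t => ((n.+1)%:R * \1_(W n) t)%:E : \bar R).
  by apply/measurable_EFinP; apply: measurable_funM.
rewrite ge0_integralD //; last 2 first.
- by move=> t _; exact: nneseries_ge0.
- by apply: ge0_emeasurable_sum => n *; [exact: u0 | exact: mterm].
rewrite integral_cst // (_ : (1 * _)%E = 1%E); last first.
  by rewrite mul1e; exact: probability_setT.
rewrite EFinD leeD2l // (integral_nneseries P measurableT mterm) //.
apply: nneseries_le => [n|N].
  by apply: integral_ge0 => t _.
apply: le_trans (_ : _ <= (\sum_(0 <= n < N) n.+1%:R * (K * r ^+ n))%:E)%E _.
  rewrite -sumEFin; apply: lee_sum => n _.
  rewrite (@integralZl_indic _ _ _ P _ measurableT (fun=> W n)) ?integral_indic ?setIT //.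
    by rewrite EFinM lee_pmul ?lee_fin ?measure_ge0 ?ler0n ?PW.
  by rewrite ltNge ler0n.
rewrite lee_fin big_mkord.
under eq_bigr => n _ do rewrite mulrCA.
by rewrite -mulr_sumr ler_wpM2l // sum_succ_geometric_le.
Qed.

Theorem mainTheorem12 (d : measure_display) (T : measurableType d) (R : realType)
  (P : probability T R)
  (X : nat -> {RV P >-> R})        (* X k = X_{k+1} *)
  (A1 : nat -> {RV P >-> R})       (* A1 s = A_1 of the s-th system *)
  (mu eps : R) :
  (* strictly positive interarrival times *)
  (forall k t, 0 < X k t) ->
  (* identically distributed *)
  (forall k, distribution P (X k) = distribution P (X 0%N)) ->
  (* independent *)
  mutually_independent P (fun k => X k : T -> R) ->
  (* mean mu in (0, oo) *)
  0 < mu -> ('E_P[X 0%N] = mu%:E)%E ->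
  (* finite exponential moment: psi(theta) < oo for some theta > 0 *)
  (exists theta : R, 0 < theta /\
     (\int[P]_t (expR (theta * X 0%N t))%:E < +oo)%E) ->
  (* stationary start of the s-th system *)
  (forall s : nat, (1 <= s)%N ->
     (forall t, A1 s t <= 0) /\
     stationary_excess P (fun t => - A1 s t) (fun t => X 0%N t / s%:R) (mu / s%:R) /\
     mutually_independent P
       (fun k => match k with 0%N => (A1 s : T -> R) | k'.+1 => (X k' : T -> R) end)) ->
  0 < eps -> eps < mu ->
  (* E kappa(A) = O(s) as s -> oo *)
  exists C : R, exists s0 : nat, forall s : nat, (s0 <= s)%N ->
    (\int[P]_t kappa (fun k => X k : T -> R) (A1 s) mu eps s t <= (C * s%:R)%:E)%E.
Proof.
move=> X_gt0 X_id X_ind _ X_mean _ start eps_gt0 eps_lt_mu.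
have X_ge0 k t : 0 <= X k t by exact: ltW.
have a_lt_mu : mu - eps < mu by rewrite ltrBlDr ltrDl.
have [W [mW [K [r [r01 PW]]] good]] :=
  @partial_sums_ge_except_geometric _ _ _ P X mu X_ge0 X_id X_ind X_mean _ a_lt_mu.
set C := 1 + K%:R / (1 - r) ^+ 2.
have C_ge0 : 0 <= C by rewrite addr_ge0 // divr_ge0 // sqr_ge0.
exists C, 1%N => s s_ge1; have [A1_le0 _] := start s s_ge1.
have kappa_le t : (kappa (fun k => X k : T -> R) (A1 s) mu eps s t <=
    1 + \sum_(n <oo) ((n.+1)%:R * \1_(W n) t)%:E)%E.
  by apply: kappa_le_bad_weight => // n; exact: good.
apply: le_trans; first exact: ge0_le_integral_nonmeas (kappa_ge0 _ _ _ _ _) kappa_le.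
apply: le_trans; first exact: integral_bad_weight_le mW (ler0n _ K) r01 PW.
by rewrite lee_fin ler_peMr // ler1n.
Qed.
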